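(* Let $\gamma,\lambda\in\mathbb{C}$ be generic and consider the six equations on cube vertex values $(u_0,u_1,u_2,u_{12},v_0,v_1,v_2,v_{12})$: \[ \mathcal A:\ \frac{u_{12}}{u_0}-\frac{(\gamma u_2-1)(\gamma-u_1)}{(\gamma-u_2)(\gamma u_1-1)}=0,\qquad \mathcal S:\ (1-\gamma u_1)(\lambda+\gamma v_2)-(\gamma-u_1)(\gamma-v_{12})u_0v_2=0, \] \[ \mathcal B:\ (\lambda+\gamma v_2-u_0v_2)(1-\gamma u_0+u_0v_0)+(1-\gamma^2-\lambda)u_0v_0=0, \] \[ \mathcal B':\ (\lambda+\gamma v_{12}-u_1v_{12})(1-\gamma u_1+u_1v_1)+(1-\gamma^2-\lambda)u_1v_1=0, \] \[ \mathcal C:\ (1-\gamma u_0)(\lambda+\gamma v_0)-(\gamma-u_0)(\gamma-v_1)u_1v_0=0,\qquad \mathcal C':\ (1-\gamma u_2)(\lambda+\gamma v_2)-(\gamma-u_2)(\gamma-v_{12})u_{12}v_2=0. \] For generic $u_0,u_1,u_2,v_0$, solve $\mathcal A=0$ for $u_{12}$, $\mathcal B=0$ for $v_2$, $\mathcal C=0$ for $v_1$. Then the three expressions for $v_{12}$ obtained from $\mathcal S=0$, $\mathcal B'=0$, $\mathcal C'=0$ coincide as rational functions of $u_0,u_1,u_2,v_0$, and the tetrahedron equations \[ \mathcal K_1:\ \big(\lambda-\gamma\lambda u_0+(1-\gamma^2)u_0v_0\big)\big(1-\gamma^2+\gamma v_{12}-u_1v_{12}\big)+(1-\gamma^2-\lambda)(\gamma-u_0)(1-\gamma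 u_1)v_0=0, \] \[ \mathcal K_2:\ (\lambda+\gamma v_2-u_0v_2)(1-\gamma u_1+u_1v_1)+(1-\gamma^2-\lambda)u_0v_2=0 \] hold identically.
   Context: The lattice sine-Gordon equation is $\frac{u_{l+1,m+1}}{u_{l,m}}=\frac{(\gamma u_{l,m+1}-1)(\gamma-u_{l+1,m})}{(\gamma-u_{l,m+1})(\gamma u_{l+1,m}-1)}$. In the cube, $u_0=u_{l,m}$, $u_1=u_{l+1,m}$, $u_2=u_{l,m+1}$, $u_{12}=u_{l+1,m+1}$, and $v_0,v_1,v_2,v_{12}$ are correspondingly placed values of an auxiliary function $v$. Generic means all denominators appearing are nonzero. *)

From HB Require Import structures.
From mathcomp Require Import all_boot all_order all_algebra.
From mathcomp Require Import complex.
From mathcomp Require Import reals.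
Set Implicit Arguments. Unset Strict Implicit. Unset Printing Implicit Defensive.
Import Order.TTheory GRing.Theory Num.Theory.
Local Open Scope ring_scope.

Section Eqs.
Variable F : fieldType.
Variables (g l : F).

Definition sgA (u0 u1 u2 u12 : F) : F :=
  u12 / u0 - ((g * u2 - 1) * (g - u1)) / ((g - u2) * (g * u1 - 1)).
Definition sgS (u0 u1 v2 v12 : F) : F :=
  (1 - g * u1) * (l + g * v2) - (g - u1) * (g - v12) * u0 * v2.
Definition sgB (u0 v0 v2 : F) : F :=
  (l + g * v2 - u0 * v2) * (1 - g * u0 + u0 * v0) + (1 - g ^+ 2 - l) * u0 * v0.
Definition sgB' (u1 v1 v12 : F) : F :=
  (l + g * v12 - u1 * v12) * (1 - g * u1 + u1 * v1) + (1 - g ^+ 2 - l) * u1 * v1.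
Definition sgC (u0 u1 v0 v1 : F) : F :=
  (1 - g * u0) * (l + g * v0) - (g - u0) * (g - v1) * u1 * v0.
Definition sgC' (u2 u12 v2 v12 : F) : F :=
  (1 - g * u2) * (l + g * v2) - (g - u2) * (g - v12) * u12 * v2.
Definition sgK1 (u0 u1 v0 v12 : F) : F :=
  (l - g * l * u0 + (1 - g ^+ 2) * u0 * v0) * (1 - g ^+ 2 + g * v12 - u1 * v12)
  + (1 - g ^+ 2 - l) * (g - u0) * (1 - g * u1) * v0.
Definition sgK2 (u0 u1 v1 v2 : F) : F :=
  (l + g * v2 - u0 * v2) * (1 - g * u1 + u1 * v1) + (1 - g ^+ 2 - l) * u0 * v2.
End Eqs.

From HB Require Import structures.
From mathcomp Require Import all_boot all_order all_algebra.
From mathcomp Require Import complex.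
From mathcomp Require Import reals.
From mathcomp Require Import ring.
Import GRing.Theory Num.Theory.
Set Implicit Arguments. Unset Strict Implicit. Unset Printing Implicit Defensive.
Local Open Scope ring_scope.

(* Every cube equation is linear in the value it is solved for,
   and only two shapes occur: up to renaming of the vertices,
     S (u0,u1,v2 ; v12) = C (u1,u0,v2 ; v12),  C' (u2,u12,v2 ; v12) = C,
     B' (u1,v1 ; v12)   = B (u1,v1 ; v12),
   all of which hold by conversion.  So it suffices to solve the two generic
   equations B(u,v;w) = 0 and C(u,u',v;w) = 0 (plus A for u12) by explicit
   formulas, valid as soon as the coefficient of w is nonzero.
   The theorem then reduces to four rational-function identities in the free
   variables u0, u1, u2, v0 after substituting u12, v1 = C-root, v2 = B-root:
   the S- and B'-values of v12 agree, the B'- and C'-values agree (both by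
   cross-multiplication and 'field'), K2 vanishes ('field'), and K1 vanishes
   because u0 v2 K1 is an explicit combination of S and a polynomial that
   vanishes at the B-root v2. *)

Section SineGordonCube.
Variable F : fieldType.
Variables g l : F.

Lemma linear_root (a b x : F) : a != 0 -> a * x + b = 0 -> x = - b / a.
Proof.
move=> a_neq0 eq_ax_b; have -> : b = - (a * x) by rewrite -(subr0 b) -eq_ax_b; ring.
by field; rewrite a_neq0.
Qed.

Definition rootA (u0 u1 u2 : F) : F :=
  u0 * ((g * u2 - 1) * (g - u1)) / ((g - u2) * (g * u1 - 1)).
Definition rootB (u v : F) : F :=
  - (l * (1 - g * u + u * v) + (1 - g ^+ 2 - l) * u * v)
  / ((g - u) * (1 - g * u + u * v)).
Definition rootC (u u' v : F) : F :=
  - ((1 - g * u) * (l + g * v) - (g - u) * g * u' * v) / ((g - u) * u' * v).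

Lemma sgA_root (u0 u1 u2 u12 : F) :
  u0 != 0 -> sgA g u0 u1 u2 u12 = 0 -> u12 = rootA u0 u1 u2.
Proof.
move=> u0_neq0 /eqP; rewrite subr_eq0 => /eqP eqA.
by rewrite -[u12](divfK u0_neq0) eqA /rootA; ring.
Qed.

Lemma sgB_root (u v w : F) :
  (g - u) * (1 - g * u + u * v) != 0 -> sgB g l u v w = 0 -> w = rootB u v.
Proof. by move=> coef_neq0 eqB; apply: linear_root coef_neq0 _; rewrite -eqB /sgB; ring. Qed.

Lemma sgC_root (u u' v w : F) :
  (g - u) * u' * v != 0 -> sgC g l u u' v w = 0 -> w = rootC u u' v.
Proof. by move=> coef_neq0 eqC; apply: linear_root coef_neq0 _; rewrite -eqC /sgC; ring. Qed.

(* The atomic nondegeneracy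
   conditions are exactly the factors of the denominators of these roots. *)
Variables u0 u1 u2 v0 u12 v1 v2 : F.
Hypotheses (u1_neq0 : u1 != 0) (v0_neq0 : v0 != 0).
Hypotheses (gu0_neq0 : g - u0 != 0) (gu2_neq0 : g - u2 != 0).
Hypotheses (gu1_neq1 : g * u1 - 1 != 0) (Bfac_neq0 : 1 - g * u0 + u0 * v0 != 0).
Hypotheses (def_u12 : u12 = rootA u0 u1 u2) (def_v1 : v1 = rootC u0 u1 v0)
           (def_v2 : v2 = rootB u0 v0).

Lemma rootS_eq_rootB' :
  (g - u1) * u0 * v2 != 0 -> (g - u1) * (1 - g * u1 + u1 * v1) != 0 ->
  rootC u1 u0 v2 = rootB u1 v1.
Proof.
move=> Sden_neq0 B'den_neq0; apply/eqP; rewrite eqr_div //; apply/eqP.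
by rewrite def_v1 def_v2 /rootB /rootC; field; rewrite ?u1_neq0 ?v0_neq0 ?gu0_neq0 ?Bfac_neq0.
Qed.

Lemma rootB'_eq_rootC' :
  (g - u1) * (1 - g * u1 + u1 * v1) != 0 -> (g - u2) * u12 * v2 != 0 ->
  rootB u1 v1 = rootC u2 u12 v2.
Proof.
move=> B'den_neq0 C'den_neq0; apply/eqP; rewrite eqr_div //; apply/eqP.
rewrite def_v1 def_v2 def_u12 /rootA /rootB /rootC; field.
by rewrite ?u1_neq0 ?v0_neq0 ?gu0_neq0 ?gu2_neq0 ?gu1_neq1 ?Bfac_neq0.
Qed.

(* K1 holds for any v12 solving S: u0 v2 K1 = P S + Q, where P is the
   v12-coefficient ratio and Q is free of v12 and vanishes at the B-root v2. *)
Lemma sgK1_of_sgS (w : F) :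
  u0 * v2 != 0 -> sgS g l u0 u1 v2 w = 0 -> sgK1 g l u0 u1 v0 w = 0.
Proof.
move=> u0v2_neq0 eqS.
pose P := l - g * l * u0 + (1 - g ^+ 2) * u0 * v0.
pose Q := u0 * v2 * (P * (1 - g ^+ 2) + (1 - g ^+ 2 - l) * (g - u0) * (1 - g * u1) * v0)
          - P * ((1 - g * u1) * (l + g * v2) - (g - u1) * g * u0 * v2).
have split_K1 : u0 * v2 * sgK1 g l u0 u1 v0 w = P * sgS g l u0 u1 v2 w + Q.
  by rewrite /sgK1 /sgS /Q /P; ring.
have Q_eq0 : Q = 0 by rewrite /Q /P def_v2 /rootB; field; rewrite ?gu0_neq0 ?Bfac_neq0.
by apply: (mulfI u0v2_neq0); rewrite split_K1 eqS Q_eq0 !mulr0 addr0.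
Qed.

Lemma sgK2_roots : sgK2 g l u0 u1 v1 v2 = 0.
Proof.
rewrite /sgK2 def_v1 def_v2 /rootC /rootB; field.
by rewrite ?u1_neq0 ?v0_neq0 ?gu0_neq0 ?Bfac_neq0.
Qed.

End SineGordonCube.

Theorem mainTheorem10 (R : realType) (g l u0 u1 u2 v0 u12 v1 v2 wS wB wC : R[i]) :
  u0 != 0 -> (g - u2) * (g * u1 - 1) != 0 ->
  (g - u0) * (1 - g * u0 + u0 * v0) != 0 ->
  (g - u0) * u1 * v0 != 0 ->
  (g - u1) * u0 * v2 != 0 ->
  (g - u1) * (1 - g * u1 + u1 * v1) != 0 ->
  (g - u2) * u12 * v2 != 0 ->
  sgA g u0 u1 u2 u12 = 0 ->
  sgB g l u0 v0 v2 = 0 ->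
  sgC g l u0 u1 v0 v1 = 0 ->
  sgS g l u0 u1 v2 wS = 0 ->
  sgB' g l u1 v1 wB = 0 ->
  sgC' g l u2 u12 v2 wC = 0 ->
  [/\ wS = wB, wB = wC,
      sgK1 g l u0 u1 v0 wS = 0 &
      sgK2 g l u0 u1 v1 v2 = 0].
Proof.
move=> u0_neq0 Aden Bden Cden Sden B'den C'den eA eB eC eS eB' eC'.
have [gu2_neq0 gu1_neq1] : g - u2 != 0 /\ g * u1 - 1 != 0.
  by apply/andP; rewrite -negb_or -mulf_eq0.
have [gu0_neq0 Bfac_neq0] : g - u0 != 0 /\ 1 - g * u0 + u0 * v0 != 0.
  by apply/andP; rewrite -negb_or -mulf_eq0.
have [u1_neq0 v0_neq0] : u1 != 0 /\ v0 != 0.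
  by move: Cden; rewrite !mulf_eq0 !negb_or => /andP[/andP[_ ->] ->].
have def_u12 := sgA_root u0_neq0 eA.
have def_v2 := sgB_root Bden eB.
have def_v1 := sgC_root Cden eC.
have u0v2_neq0 : u0 * v2 != 0 by move: Sden; rewrite -mulrA mulf_eq0 negb_or => /andP[].
(* S and C' are C-shaped and B' is B-shaped, so their roots are rootC / rootB. *)
split.
- rewrite (sgC_root Sden eS) (sgB_root B'den eB').
  exact: (rootS_eq_rootB' u1_neq0 v0_neq0 gu0_neq0 Bfac_neq0 def_v1 def_v2 Sden B'den).
- rewrite (sgB_root B'den eB') (sgC_root C'den eC').
  exact: (rootB'_eq_rootC' u1_neq0 v0_neq0 gu0_neq0 gu2_neq0 gu1_neq1 Bfac_neq0
            def_u12 def_v1 def_v2 B'den C'den).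
- exact: (sgK1_of_sgS gu0_neq0 Bfac_neq0 def_v2 u0v2_neq0 eS).
- exact: (sgK2_roots u1_neq0 v0_neq0 gu0_neq0 Bfac_neq0 def_v1 def_v2).
Qed.
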